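(* Let $C$ be a linear completely regular $[n,k,2]_q$ code with covering radius $\rho=1$, and let $n_a$ be the number of codewords at distance one from any vector not in $C$. If $k<n-1$, then the set of coordinate positions $\{1,\dots,n\}$ can be partitioned into sets $X_1,\dots,X_{n/n_a}$, each of size $n_a$, such that every codeword of weight $2$ has its support contained in one of these sets.
   Context: Hamming distance; support of a vector = set of its nonzero coordinates; covering radius $\rho=\max_{\bf v}\min_{{\bf x}\in C}d({\bf v},{\bf x})$. $C$ is completely regular if for every vector ${\bf x}$, with $t=d({\bf x},C)$, the number of codewords at distance $i$ from ${\bf x}$ depends only on $t$ and $i$ (so $n_a$ is well defined). *)

From HB Require Import structures.
From mathcomp Require Import all_boot all_order all_algebra.
Set Implicit Arguments. Unset Strict Implicit. Unset Printing Implicit Defensive.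
Import GRing.Theory.
Local Open Scope ring_scope.

Section Codes.
Variables (F : finFieldType) (n : nat).

Definition supp (x : 'rV[F]_n) : {set 'I_n} := [set i | x 0 i != 0].

Definition wt (x : 'rV[F]_n) : nat := #|supp x|.
Definition hdist (x y : 'rV[F]_n) : nat := #|[set i | x 0 i != y 0 i]|.

(* distance from a vector to a code: min over codewords (C always contains 0) *)
Definition dist_code (C : {vspace 'rV[F]_n}) (v : 'rV[F]_n) : nat :=
  \big[minn/n]_(c : 'rV[F]_n | c \in C) hdist v c.

Definition cov_radius (C : {vspace 'rV[F]_n}) : nat :=
  \max_(v : 'rV[F]_n) dist_code C v.

Definition min_dist_eq (C : {vspace 'rV[F]_n}) (d : nat) : Prop :=
  (exists x y, [/\ x \in C, y \in C, x != y & hdist x y = d]) /\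
  (forall x y, x \in C -> y \in C -> x != y -> (d <= hdist x y)%N).

Definition n_at (C : {vspace 'rV[F]_n}) (x : 'rV[F]_n) (i : nat) : nat :=
  #|[set c : 'rV[F]_n | (c \in C) && (hdist x c == i)]|.

Definition completely_regular (C : {vspace 'rV[F]_n}) : Prop :=
  forall x y : 'rV[F]_n, dist_code C x = dist_code C y ->
    forall i, n_at C x i = n_at C y i.

End Codes.

(** Only the minimum distance and the constancy of [n_a] matter.  Call two
    positions joined when some codeword is supported exactly on them; since
    [C] has no word of weight one, eliminating the common coordinate of two
    weight-2 codewords shows that this is an equivalence relation.  The
    codewords at distance one from the unit vector [e_x] are [0] and, for each
    [y] joined to [x], the unique codeword [c] with [supp c = {x, y}] and
    [c_x = 1].  So every class has exactly [n_a] elements, and the classes form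
    the required partition. *)
From HB Require Import structures.
From mathcomp Require Import all_boot all_order all_algebra.
Set Implicit Arguments. Unset Strict Implicit. Unset Printing Implicit Defensive.
Import GRing.Theory.
Local Open Scope ring_scope.

(* For [m = 0] both sides are [0]: a partition has no empty block. *)
Lemma card_uniform_partition_div (T : finType) (P : {set {set T}}) (D : {set T}) m :
  partition P D -> {in P, forall X : {set T}, #|X| = m} -> #|P| = (#|D| %/ m)%N.
Proof.
move=> partP unifP; rewrite (card_uniform_partition unifP partP).
case: m unifP => [|m] unifP; last by rewrite mulnK.
rewrite muln0 div0n; apply/eqP; rewrite cards_eq0.
apply: contraTT isT => /set0Pn[X XP].
by have := partition_neq0 partP XP; rewrite -cards_eq0 unifP.
Qed.

Section Supports.
Variables (F : finFieldType) (n : nat).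
Implicit Types (x y : 'rV[F]_n) (i j : 'I_n).

Lemma supp_coordN x i : (i \notin supp x) = (x 0 i == 0).
Proof. by rewrite inE negbK. Qed.

Lemma hdist_wt x y : hdist x y = wt (x - y).
Proof. by apply: eq_card => j; rewrite !inE !mxE subr_eq0. Qed.

Lemma supp_delta i : supp (delta_mx 0 i : 'rV[F]_n) = [set i].
Proof.
apply/setP => j; rewrite !inE mxE eqxx /=.
by case: (j =P i); rewrite ?oner_eq0 ?eqxx.
Qed.

End Supports.

Lemma min_dist2_wt1 (F : finFieldType) n (C : {vspace 'rV[F]_n}) :
  min_dist_eq C 2 -> forall c, c \in C -> (wt c <= 1)%N -> c = 0.
Proof.
move=> [_ md] c cC wt_c; apply/eqP; apply: contraTT wt_c => c_nz.
by have := md _ _ cC (mem0v C) c_nz; rewrite hdist_wt subr0 -ltnNge.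
Qed.

Section WeightTwoClasses.
Variables (F : finFieldType) (n : nat) (C : {vspace 'rV[F]_n}).
Hypothesis no_wt1 : forall c, c \in C -> (wt c <= 1)%N -> c = 0.
Implicit Types (c : 'rV[F]_n) (i j k : 'I_n).

Lemma code_supp_sub1 c j : c \in C -> supp c \subset [set j] -> c = 0.
Proof.
move=> cC sub_c; apply: no_wt1 => //.
by have := subset_leq_card sub_c; rewrite cards1.
Qed.

Lemma delta_notin_code i : (delta_mx 0 i : 'rV[F]_n) \notin C.
Proof.
apply/negP => /code_supp_sub1; rewrite supp_delta => /(_ _ (subxx _)).
by move/rowP/(_ i); rewrite !mxE !eqxx => /eqP; rewrite oner_eq0.
Qed.

Definition joined i j :=
  (i == j) || [exists c, (c \in C) && (supp c == [set i; j])].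

Lemma joinedP i j :
  reflect (i = j \/ exists2 c, c \in C & supp c = [set i; j]) (joined i j).
Proof.
apply: (iffP orP) => [[/eqP|/existsP[c /andP[cC /eqP sc]]]|[->|[c cC sc]]].
- by left.
- by right; exists c.
- by left.
- by right; apply/existsP; exists c; rewrite sc eqxx andbT.
Qed.

Lemma joined_refl i : joined i i.
Proof. by rewrite /joined eqxx. Qed.

Lemma joined_sym i j : joined i j -> joined j i.
Proof.
case/joinedP => [->|[c cC sc]]; first exact: joined_refl.
by apply/joinedP; right; exists c; rewrite // setUC.
Qed.

Lemma code_supp2_neq c i j : c \in C -> supp c = [set i; j] -> i != j.
Proof.
move=> cC sc; apply/eqP => ij; move: sc; rewrite -ij setUid => sc.
have c0 : c = 0 by apply: (@code_supp_sub1 _ i); rewrite // sc.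
by move/setP/(_ i): sc; rewrite c0 !inE mxE !eqxx.
Qed.

(* The combination [c2_j c1 - c1_j c2] kills the shared coordinate [j]. *)
Lemma joined_trans j i k : joined i j -> joined j k -> joined i k.
Proof.
case/joinedP => [->//|[c1 c1C s1]]; case/joinedP => [<-|[c2 c2C s2]].
  by apply/joinedP; right; exists c1.
have [<-|ik] := eqVneq i k; first exact: joined_refl.
have ij := code_supp2_neq c1C s1; have jk := code_supp2_neq c2C s2.
have c1t t : t != i -> t != j -> c1 0 t = 0.
  by move=> ti tj; apply/eqP; rewrite -supp_coordN s1 !inE negb_or ti.
have c2t t : t != j -> t != k -> c2 0 t = 0.
  by move=> tj tk; apply/eqP; rewrite -supp_coordN s2 !inE negb_or tj.
have c1_nz t : t \in [set i; j] -> c1 0 t != 0 by rewrite -s1 inE.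
have c2_nz t : t \in [set j; k] -> c2 0 t != 0 by rewrite -s2 inE.
apply/joinedP; right; exists (c2 0 j *: c1 - c1 0 j *: c2).
  by rewrite memvB ?memvZ.
apply/setP => t; rewrite !inE !mxE.
have [->|ti] := eqVneq t i.
  by rewrite (c2t i ij ik) mulr0 subr0 mulf_neq0 ?c1_nz ?c2_nz ?eqxx ?setU11.
have [->|tk] := eqVneq t k.
  have [ki kj] : k != i /\ k != j by rewrite !(eq_sym k).
  rewrite (c1t k ki kj) mulr0 sub0r oppr_eq0.
  by rewrite mulf_neq0 ?c1_nz ?c2_nz // !inE eqxx ?orbT.
have [->|tj] := eqVneq t j; first by rewrite mulrC subrr eqxx.
by rewrite (c1t t ti tj) (c2t t tj tk) !mulr0 subrr eqxx.
Qed.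

Lemma joined_equiv : equivalence_rel joined.
Proof.
move=> i j k; split=> [|ij]; first exact: joined_refl.
by apply/idP/idP; [apply: joined_trans (joined_sym ij) | apply: joined_trans ij].
Qed.

Lemma supp_delta_sub1_joined c i j :
  c \in C -> supp (delta_mx 0 i - c) = [set j] -> joined i j.
Proof.
move=> cC sc; have [<-|ij] := eqVneq i j; first exact: joined_refl.
have coord t : t != j -> c 0 t = (t == i)%:R.
  move=> tj; have : t \notin supp (delta_mx 0 i - c) by rewrite sc inE.
  by rewrite supp_coordN !mxE eqxx subr_eq0 eq_sym => /eqP.
apply/joinedP; right; exists c => //; apply/setP => t; rewrite !inE.
have [->|tj] := eqVneq t j; last first.
  by rewrite coord // orbF; case: (t =P i); rewrite ?oner_eq0 ?eqxx.
have := set11 j; rewrite -sc inE !mxE eqxx /= (eq_sym j) (negbTE ij).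
by rewrite mulr0n sub0r oppr_eq0 orbT.
Qed.

Lemma joined_supp_delta_sub1 i j :
  joined i j -> exists2 c, c \in C & supp (delta_mx 0 i - c) = [set j].
Proof.
case/joinedP => [<-|[c cC sc]]; first by exists 0; rewrite ?mem0v // subr0 supp_delta.
have ij := code_supp2_neq cC sc.
have ci : c 0 i != 0 by rewrite -supp_coordN sc setU11.
exists ((c 0 i)^-1 *: c); first by rewrite memvZ.
apply/setP => t; rewrite !inE !mxE eqxx /=.
have [->|ti] := eqVneq t i; first by rewrite mulVf // subrr eqxx (negbTE ij).
rewrite mulr0n sub0r oppr_eq0 mulf_eq0 invr_eq0 (negbTE ci) /=.
by rewrite -supp_coordN sc !inE (negbTE ti) negbK.
Qed.

Lemma n_at_delta i : n_at C (delta_mx 0 i) 1 = #|[set j | joined i j]|.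
Proof.
pose e : 'rV[F]_n := delta_mx 0 i.
pose S := [set c | (c \in C) && (hdist e c == 1)%N].
pose diff c := supp (e - c).
have diffS c : c \in S -> c \in C /\ exists j, diff c = [set j].
  by rewrite inE hdist_wt /wt => /andP[cC /cards1P].
have inj_diff : {in S &, injective diff}.
  move=> c c' /diffS[cC [j dj]] /diffS[c'C _] eq_diff.
  apply/eqP; rewrite -subr_eq0; apply/eqP/(@code_supp_sub1 _ j); first exact: memvB.
  apply/subsetP => t; apply: contraLR; rewrite -dj => tj.
  move: (tj); rewrite eq_diff => tj'.
  rewrite !supp_coordN !mxE subr_eq0 in tj tj' *.
  by rewrite -(eqP tj) -(eqP tj').
change (#|S| = #|[set j | joined i j]|).
rewrite -(card_in_imset inj_diff) -[RHS](card_imset _ set1_inj).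
apply: eq_card => X; apply/imsetP/imsetP => [[c cS ->]|[j]].
  have [cC [j dj]] := diffS c cS.
  by exists j; rewrite // inE (supp_delta_sub1_joined cC dj).
rewrite inE => /joined_supp_delta_sub1[c cC dc] ->; exists c => //.
by rewrite inE cC hdist_wt /wt dc cards1.
Qed.

End WeightTwoClasses.

Theorem lemma3p6 (F : finFieldType) (n k na : nat) (C : {vspace 'rV[F]_n}) :
  \dim C = k ->
  min_dist_eq C 2 ->
  cov_radius C = 1%N ->
  completely_regular C ->
  (forall v : 'rV[F]_n, v \notin C -> n_at C v 1 = na) ->
  (k < n.-1)%N ->
  exists P : {set {set 'I_n}},
    [/\ partition P [set: 'I_n],
        #|P| = (n %/ na)%N,
        (forall X, X \in P -> #|X| = na) &
        (forall c : 'rV[F]_n, c \in C -> wt c = 2%N ->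
           exists2 X, X \in P & supp c \subset X)].
Proof.
move=> _ md _ _ n_at_na _; have no_wt1 := min_dist2_wt1 md.
have eqv : {in [set: 'I_n] & &, equivalence_rel (joined C)}.
  by move=> i j l _ _ _; apply: joined_equiv.
pose P := equivalence_partition (joined C) [set: 'I_n].
have partP : partition P [set: 'I_n] := equivalence_partitionP eqv.
have blockP : {in P, forall X : {set 'I_n}, #|X| = na}.
  move=> _ /imsetP[i _ ->]; rewrite -(n_at_na _ (delta_notin_code no_wt1 i)).
  by rewrite n_at_delta //; apply: eq_card => j; rewrite !inE.
exists P; split=> //.
  by rewrite (card_uniform_partition_div partP blockP) cardsT card_ord.
move=> c cC /eqP/cards2P[i [j [_ sc]]].
have Pi : pblock P i \in P by rewrite pblock_mem // (cover_partition partP).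
exists (pblock P i) => //; apply/subsetP => t; rewrite sc !inE.
case/orP=> /eqP->; rewrite (pblock_equivalence_partition eqv) ?inE //.
  exact: joined_refl.
by apply/joinedP; right; exists c.
Qed.
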